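(* Let $H_1$ and $H_2$ be vertex-disjoint connected graphs with $u\in V(H_1)$, $w\in V(H_2)$, where $H_2$ has at least two vertices. Let $k\geqslant 1$ and let $G$ be the graph obtained from $H_1\cup H_2$ by adding the edge $uw$, a new vertex $v$ adjacent to $u$, and $k$ new vertices $v_1,\ldots,v_k$ each adjacent only to $v$. Let $W=N_G(v)\setminus\{u\}=\{v_1,\ldots,v_k\}$ and $$G[v\rightarrow w;2]=G-\{vz: z\in W\}+\{wz: z\in W\}.$$ If $\varepsilon_{H_2}(w)\geqslant\varepsilon_{H_1}(u)$, then $\xi^{ee}(G)<\xi^{ee}(G[v\rightarrow w;2])$.
   Context: All graphs are finite, simple and connected. For a vertex $x$ of a connected graph $G$, $\varepsilon_G(x)$ is the eccentricity of $x$ and $d_G(x)$ its degree; $N_G(v)$ is the neighbourhood of $v$. The total reciprocal edge-eccentricity of $G$ is $\xi^{ee}(G)=\sum_{uv\in E(G)}\left(\frac{1}{\varepsilon_G(u)}+\frac{1}{\varepsilon_G(v)}\right)=\sum_{x\in V(G)}\frac{d_G(x)}{\varepsilon_G(x)}$. *)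

From mathcomp Require Import all_boot all_order all_algebra.
Set Implicit Arguments. Unset Strict Implicit. Unset Printing Implicit Defensive.
Import Order.TTheory GRing.Theory Num.Theory.

Section Graphs.
Variables (T : finType) (e : rel T).

Definition simple_graph : Prop := symmetric e /\ irreflexive e.
Definition connected_graph : Prop := forall x y : T, connect e x y.

Definition ball (x : T) (k : nat) : {set T} :=
  iter k (fun A : {set T} => A :|: [set y | [exists z in A, e z y]]) [set x].

Definition gdist (x y : T) : nat :=
  find (fun k => y \in ball x k) (iota 0 #|T|).

Definition ecc (x : T) : nat := \max_(y : T) gdist x y.

Definition deg (x : T) : nat := #|[set y | e x y]|.

Definition xi_ee : rat := (\sum_(x : T) (deg x)%:R / (ecc x)%:R)%R.
End Graphs.

(* Construction: vertices of H1, H2, then None = v, Some i = v_i (i < k).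
   [hub] is the vertex the pendant vertices v_i are attached to. *)
Section Construction.
Variables (T1 T2 : finType) (e1 : rel T1) (e2 : rel T2) (k : nat)
          (u : T1) (w : T2).

Definition cV : finType := ((T1 + T2) + option 'I_k)%type.

Definition cedge (hub : cV) (a b : cV) : bool :=
  match a, b with
  | inr (Some _), inr (Some _) => false
  | inr (Some _), _ => b == hub
  | _, inr (Some _) => a == hub
  | inl (inl x), inl (inl y) => e1 x y
  | inl (inr x), inl (inr y) => e2 x y
  | inl (inl x), inl (inr y) => (x == u) && (y == w)
  | inl (inr y), inl (inl x) => (x == u) && (y == w)
  | inl (inl x), inr None => x == u
  | inr None, inl (inl x) => x == u
  | _, _ => false
  end.

Definition G_edge : rel cV := cedge (inr None).
Definition G_moved_edge : rel cV := cedge (inl (inr w)).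
End Construction.

From mathcomp Require Import all_boot all_order all_algebra.
From mathcomp Require Import zify lra.
Import Order.TTheory GRing.Theory Num.Theory.
Set Implicit Arguments. Unset Strict Implicit. Unset Printing Implicit Defensive.

(* Moving the pendant vertices from v to w never lengthens a distance, except
   between v and the moved vertices, where it goes from 1 to 3; since v and the
   v_i already have eccentricity at least 3 in G, no eccentricity increases.
   Degrees agree except that v loses k neighbours to w, so it suffices that
   ecc_G'(w) <= 1 + ecc_H2(w) < 2 + ecc_H2(w) <= ecc_G(v); the first inequality
   is where ecc_H1(u) <= ecc_H2(w) is used.  Distances are bounded above by
   explicit walks and below by functions that grow by at most one along each
   edge. *)

Section Distance.
Variables (T : finType) (e : rel T).

Definition lipschitz (h : T -> nat) : Prop := forall a b, e a b -> h b <= (h a).+1.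

Lemma ball0 x : ball e x 0 = [set x].
Proof. by []. Qed.

Lemma ballS x n :
  ball e x n.+1 = ball e x n :|: [set y | [exists z in ball e x n, e z y]].
Proof. by []. Qed.

Lemma ball_step x n y z : y \in ball e x n -> e y z -> z \in ball e x n.+1.
Proof.
move=> yB yz; rewrite ballS !inE; apply/orP; right.
by apply/existsP; exists y; rewrite yB yz.
Qed.

Lemma ball_subS x n y : y \in ball e x n -> y \in ball e x n.+1.
Proof. by move=> yB; rewrite ballS inE yB. Qed.

Lemma ball_mono x m n y : m <= n -> y \in ball e x m -> y \in ball e x n.
Proof.
move=> /subnKC <- yB; elim: (n - m) => [|j IH]; first by rewrite addn0.
by rewrite addnS; apply: ball_subS.
Qed.

Lemma mem_ball_self x n : x \in ball e x n.
Proof. by apply: (ball_mono (leq0n n)); rewrite ball0 inE. Qed.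

Lemma mem_ball1 x y : e x y -> y \in ball e x 1.
Proof. exact: ball_step (mem_ball_self x 0). Qed.

Lemma ball_trans x y z m n :
  y \in ball e x m -> z \in ball e y n -> z \in ball e x (m + n).
Proof.
move=> yB; elim: n z => [|n IH] z; first by rewrite ball0 addn0 inE => /eqP ->.
rewrite addnS ballS inE => /orP [/IH/ball_subS //|].
by rewrite inE => /existsP [z' /andP [/IH z'B z'z]]; apply: ball_step z'B z'z.
Qed.

Lemma ball_lipschitz h x y m :
  lipschitz h -> y \in ball e x m -> h y <= h x + m.
Proof.
move=> hL; elim: m y => [|m IH] y; first by rewrite ball0 addn0 inE => /eqP ->.
rewrite addnS ballS inE => /orP [/IH/leqW //|].
by rewrite inE => /existsP [z /andP [/IH zB zy]]; apply: leq_trans (hL _ _ zy) _.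
Qed.

Lemma gdist_le_card x y : gdist e x y <= #|T|.
Proof. by rewrite -[X in _ <= X](size_iota 0) find_size. Qed.

Lemma gdist_le x y m : y \in ball e x m -> gdist e x y <= m.
Proof.
move=> yB; have [mT|Tm] := ltnP m #|T|; last exact: leq_trans (gdist_le_card _ _) Tm.
by rewrite leqNgt; apply/negP => /(before_find 0); rewrite nth_iota // add0n yB.
Qed.

Lemma mem_ball_gdist x y : gdist e x y < #|T| -> y \in ball e x (gdist e x y).
Proof.
move=> lt; have reach : has (fun n => y \in ball e x n) (iota 0 #|T|).
  by rewrite has_find size_iota.
by have := nth_find 0 reach; rewrite nth_iota // -(size_iota 0 #|T|) -has_find.
Qed.

Lemma gdist_xx x : gdist e x x = 0.
Proof. by apply/eqP; rewrite -leqn0 gdist_le // mem_ball_self. Qed.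

Lemma gdist_gt0 x y : x != y -> 0 < gdist e x y.
Proof.
move=> xy; rewrite lt0n; apply: contra xy => /eqP d0.
have cardT : 0 < #|T| by apply/card_gt0P; exists x.
have := mem_ball_gdist (x := x) (y := y).
by rewrite d0 ball0 inE eq_sym => /(_ cardT).
Qed.

Lemma lipschitz_gdist x : lipschitz (gdist e x).
Proof.
move=> y z yz; have [lt|ge] := ltnP (gdist e x y) #|T|.
  exact/gdist_le/(ball_step (mem_ball_gdist lt) yz).
exact: leq_trans (gdist_le_card _ _) (leqW ge).
Qed.

(* The [minn] is needed because [gdist] is [#|T|] for unreachable vertices. *)
Lemma minn_lipschitz_le_gdist h x y :
  lipschitz h -> h x = 0 -> minn (h y) #|T| <= gdist e x y.
Proof.
move=> hL hx0; have [lt|ge] := ltnP (gdist e x y) #|T|.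
  by rewrite geq_min -[leqRHS]add0n -hx0 ball_lipschitz ?mem_ball_gdist.
by rewrite geq_min (leq_trans ge) ?orbT.
Qed.

Lemma mem_ball_path x p : path e x p -> last x p \in ball e x (size p).
Proof.
elim/last_ind: p => [|p z IH]; first by rewrite mem_ball_self.
rewrite rcons_path last_rcons size_rcons => /andP [/IH pB pz].
exact: ball_step pB pz.
Qed.

Lemma gdist_lt_card x y : connected_graph e -> gdist e x y < #|T|.
Proof.
move=> conn; have /connectP [p p_path ->] := conn x y.
case/shortenP: p_path => p' p'_path p'_uniq _.
have := max_card (mem (x :: p')); rewrite (card_uniqP p'_uniq) /=.
exact/leq_ltn_trans/gdist_le/mem_ball_path.
Qed.

Lemma leq_gdist_ecc x y : gdist e x y <= ecc e x.
Proof. exact: (leq_bigmax (F := gdist e x)). Qed.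

Lemma ecc_leq x m : (forall y, gdist e x y <= m) -> ecc e x <= m.
Proof. by move=> le_m; apply/bigmax_leqP => y _. Qed.

Lemma ecc_gt0 x y : x != y -> 0 < ecc e x.
Proof. by move=> xy; apply: leq_trans (gdist_gt0 xy) (leq_gdist_ecc x y). Qed.

End Distance.

Lemma ball_hom (T T' : finType) (e : rel T) (e' : rel T') (f : T -> T') x y m :
  (forall a b, e a b -> e' (f a) (f b)) -> y \in ball e x m -> f y \in ball e' (f x) m.
Proof.
move=> fE; elim: m y => [|m IH] y; first by rewrite !ball0 !inE => /eqP ->.
rewrite ballS inE => /orP [/IH/ball_subS //|].
by rewrite inE => /existsP [z /andP [/IH zB zy]]; apply: ball_step zB (fE _ _ zy).
Qed.

Section Construction.
Variables (T1 T2 : finType) (e1 : rel T1) (e2 : rel T2) (u : T1) (w : T2) (k : nat).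

Notation V := (cV T1 T2 k).
Notation cE := (@cedge T1 T2 e1 e2 k u w).

Definition pendant (z : V) : bool := if z is inr (Some _) then true else false.

Definition W : {set V} := [set z | pendant z].

Lemma deg_cedge_pendant h i : ~~ pendant h -> deg (cE h) (inr (Some i)) = 1.
Proof.
move=> hW; rewrite -(cards1 h); apply: eq_card => z; rewrite !inE.
by case: z => [[?|?]|[?|]] //=; case: h hW => [[?|?]|[?|]].
Qed.

Lemma deg_cedge_hub h h' :
  ~~ pendant h -> ~~ pendant h' -> h != h' -> deg (cE h) h = deg (cE h') h + #|W|.
Proof.
move=> hW h'W hh'; rewrite /deg.
have -> : [set z | cE h h z] = [set z | cE h' h z] :|: W.
  apply/setP => z; rewrite !inE.
  case: h h' hW h'W hh' => [[?|?]|[?|]] // [[?|?]|[?|]] // _ _ hh';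
    case: z => [[?|?]|[?|]] /=; rewrite ?eqxx ?orbT ?orbF //.
rewrite cardsU; suff -> : [set z | cE h' h z] :&: W = set0 by rewrite cards0 subn0.
apply/setP => -[[?|?]|[?|]]; rewrite !inE ?andbF //= andbT.
by case: h hW hh' => [[?|?]|[?|]] //= _ /negbTE.
Qed.

Lemma deg_cedge_other h h' x :
  ~~ pendant h -> ~~ pendant h' -> x != h -> x != h' -> deg (cE h) x = deg (cE h') x.
Proof.
move=> hW h'W; case: x => [[a|a]|[i|]] xh xh'; try by rewrite !deg_cedge_pendant.
all: apply: eq_card => -[[?|?]|[?|]]; rewrite !inE //=.
all: by rewrite (negbTE xh) (negbTE xh').
Qed.

Notation G := (@G_edge T1 T2 e1 e2 k u w).
Notation G' := (@G_moved_edge T1 T2 e1 e2 k u w).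
Notation d1 := (gdist e1).
Notation d2 := (gdist e2).

(* The distance tables of G and G'.  Only [gdist G' <= dist_G'] (explicit walks)
   and [dist_G <= gdist G] ([dist_G x] is 1-Lipschitz and vanishes at [x]) are
   proved. *)
Definition dist_G (x z : V) : nat :=
  match x, z with
  | inl (inl a), inl (inl b) => d1 a b
  | inl (inl a), inl (inr y) => d1 a u + 1 + d2 w y
  | inl (inl a), inr (Some _) => d1 a u + 2
  | inl (inl a), inr None => d1 a u + 1
  | inl (inr c), inl (inl b) => d2 c w + 1 + d1 u b
  | inl (inr c), inl (inr y) => d2 c y
  | inl (inr c), inr (Some _) => d2 c w + 3
  | inl (inr c), inr None => d2 c w + 2
  | inr (Some _), inl (inl b) => 2 + d1 u b
  | inr (Some _), inl (inr y) => 3 + d2 w y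
  | inr (Some i), inr (Some j) => if j == i then 0 else 2
  | inr (Some _), inr None => 1
  | inr None, inl (inl b) => 1 + d1 u b
  | inr None, inl (inr y) => 2 + d2 w y
  | inr None, inr (Some _) => 1
  | inr None, inr None => 0
  end.

Definition dist_G' (x z : V) : nat :=
  match x, z with
  | inl (inr c), inr (Some _) => d2 c w + 1
  | inr (Some _), inl (inr y) => 1 + d2 w y
  | inr (Some _), inr None | inr None, inr (Some _) => 3
  | _, _ => dist_G x z
  end.

Lemma dist_G_xx x : dist_G x x = 0.
Proof. by case: x => [[a|a]|[i|]] //=; rewrite ?gdist_xx ?eqxx. Qed.

Lemma lipschitz_dist_G x : lipschitz G (dist_G x).
Proof.
have L1 := @lipschitz_gdist _ e1; have L2 := @lipschitz_gdist _ e2.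
move=> a b; case: x => [[x|x]|[i|]];
  case: a => [[a|a]|[j|]]; case: b => [[b|b]|[j'|]] //=.
all: first [ exact: L1 | exact: L2 | by move=> /(L1 u); lia | by move=> /(L2 w); lia
  | by move=> /andP [/eqP -> /eqP ->]; rewrite !gdist_xx; lia
  | by move=> /eqP ->; rewrite ?gdist_xx; lia | by case: ifP; lia | lia ].
Qed.

Hypotheses (conn1 : connected_graph e1) (conn2 : connected_graph e2).

Lemma mem_ball_dist_G' x z : z \in ball G' x (dist_G' x z).
Proof.
have ballX a b : inl (inl b) \in ball G' (inl (inl a)) (d1 a b).
  apply: (ball_hom (e := e1) (f := fun a : T1 => inl (inl a) : V)) => //.
  exact/mem_ball_gdist/gdist_lt_card.
have ballY c y : inl (inr y) \in ball G' (inl (inr c)) (d2 c y).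
  apply: (ball_hom (e := e2) (f := fun a : T2 => inl (inr a) : V)) => //.
  exact/mem_ball_gdist/gdist_lt_card.
have uw : inl (inr w) \in ball G' (inl (inl u)) 1 by rewrite mem_ball1 //= !eqxx.
have wu : inl (inl u) \in ball G' (inl (inr w)) 1 by rewrite mem_ball1 //= !eqxx.
have uv : inr None \in ball G' (inl (inl u)) 1 by rewrite mem_ball1 //= !eqxx.
have vu : inl (inl u) \in ball G' (inr None) 1 by rewrite mem_ball1 //= !eqxx.
have wP i : inr (Some i) \in ball G' (inl (inr w)) 1 by rewrite mem_ball1 //= !eqxx.
have Pw i : inl (inr w) \in ball G' (inr (Some i)) 1 by rewrite mem_ball1 //= !eqxx.
case: x => [[a|c]|[i|]]; case: z => [[b|y]|[j|]]; simpl dist_G'; simpl dist_G.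
- exact: ballX.
- exact: ball_trans (ball_trans (ballX a u) uw) (ballY w y).
- by apply: (ball_mono _ (ball_trans (ball_trans (ballX a u) uw) (wP j))); rewrite -addnA.
- exact: ball_trans (ballX a u) uv.
- exact: ball_trans (ball_trans (ballY c w) wu) (ballX u b).
- exact: ballY.
- exact: ball_trans (ballY c w) (wP j).
- by apply: (ball_mono _ (ball_trans (ball_trans (ballY c w) wu) uv)); rewrite -addnA.
- exact: ball_trans (ball_trans (Pw i) wu) (ballX u b).
- exact: ball_trans (Pw i) (ballY w y).
- by case: eqP => [->|_]; [exact: mem_ball_self | exact: ball_trans (Pw i) (wP j)].
- exact: ball_trans (ball_trans (Pw i) wu) uv.
- exact: ball_trans vu (ballX u b).
- exact: ball_trans (ball_trans vu uw) (ballY w y).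
- exact: ball_trans (ball_trans vu uw) (wP j).
- exact: mem_ball_self.
Qed.

Definition hub_pendant (x z : V) : bool :=
  ((x == inr None) && pendant z) || (pendant x && (z == inr None)).

Lemma dist_G'_le_dist_G x z : ~~ hub_pendant x z -> dist_G' x z <= dist_G x z.
Proof. by case: x => [[a|c]|[i|]]; case: z => [[b|y]|[j|]] //= _; lia. Qed.

Lemma gdist_G'_le_dist_G' x z : gdist G' x z <= dist_G' x z.
Proof. exact/gdist_le/mem_ball_dist_G'. Qed.

Lemma minn_dist_G_le_gdist x z : minn (dist_G x z) #|V| <= gdist G x z.
Proof. exact: minn_lipschitz_le_gdist (lipschitz_dist_G x) (dist_G_xx x). Qed.

Lemma card_cV : #|V| = #|T1| + #|T2| + k.+1.
Proof. by rewrite !card_sum card_option card_ord. Qed.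

Lemma ecc_G_hub : 2 + ecc e2 w <= ecc G (inr None).
Proof.
have farY y : 2 + d2 w y <= ecc G (inr None).
  have := minn_dist_G_le_gdist (inr None) (inl (inr y)).
  have := leq_gdist_ecc G (inr None) (inl (inr y)).
  have := gdist_lt_card w y conn2; have : 0 < #|T1| by apply/card_gt0P; exists u.
  rewrite card_cV /=; lia.
suff : ecc e2 w <= ecc G (inr None) - 2 by have := farY w; rewrite gdist_xx; lia.
by apply: ecc_leq => y; have := farY y; lia.
Qed.

Lemma ecc_G_pendant i : 3 <= ecc G (inr (Some i)).
Proof.
have := minn_dist_G_le_gdist (inr (Some i)) (inl (inr w)).
have := leq_gdist_ecc G (inr (Some i)) (inl (inr w)).
have : 0 < #|T1| by apply/card_gt0P; exists u.
have : 0 < #|T2| by apply/card_gt0P; exists w.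
by rewrite card_cV /= gdist_xx; lia.
Qed.

Hypothesis T2_nontrivial : 1 < #|T2|.

Lemma ecc_H2_gt0 : 0 < ecc e2 w.
Proof.
have /card_gt1P [y [y' [_ _ yy']]] := T2_nontrivial.
have [->|wy] := eqVneq w y; first exact: ecc_gt0 yy'.
exact: ecc_gt0 wy.
Qed.

Lemma ecc_G'_le_G x : ecc G' x <= ecc G x.
Proof.
(* Only the pairs {v, v_i} get farther apart in G' (from 1 to 3), and for those
   ecc_G is already at least 3. *)
apply: ecc_leq => z; have := gdist_G'_le_dist_G' x z.
have [hp|] := boolP (hub_pendant x z).
  move: hp; case: x => [[a|c]|[i|]]; case: z => [[b|y]|[j|]] //= _ le3.
  - exact: leq_trans le3 (ecc_G_pendant i).
  - by apply: leq_trans le3 (leq_trans _ ecc_G_hub); apply: ecc_H2_gt0.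
move=> /dist_G'_le_dist_G le_G le_G'; apply: leq_trans (leq_gdist_ecc G x z).
apply: leq_trans (minn_dist_G_le_gdist x z).
by rewrite leq_min gdist_le_card (leq_trans le_G').
Qed.

Lemma ecc_G'_w : ecc e1 u <= ecc e2 w -> ecc G' (inl (inr w)) <= 1 + ecc e2 w.
Proof.
move=> ecc12; apply: ecc_leq => z; apply: leq_trans (gdist_G'_le_dist_G' _ z) _.
case: z => [[b|y]|[j|]] /=; rewrite ?gdist_xx.
- by have := leq_gdist_ecc e1 u b; lia.
- by have := leq_gdist_ecc e2 w y; lia.
- by [].
- exact: ecc_H2_gt0.
Qed.

Lemma ecc_G'_gt0 x : 0 < k -> 0 < ecc G' x.
Proof.
move=> k_gt0; have [z xz] : exists z, x != z.
  by case: x => [a|[i|]]; [exists (inr None) | exists (inr None) |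
                           exists (inr (Some (Ordinal k_gt0)))].
exact: ecc_gt0 xz.
Qed.
End Construction.

Lemma bigD2 (R : nmodType) (T : finType) (F : T -> R) a b : a != b ->
  (\sum_x F x = F a + (F b + \sum_(x | (x != a) && (x != b)) F x))%R.
Proof. by move=> ab; rewrite (bigD1 a) // (bigD1 b) 1?eq_sym. Qed.

Lemma ler_natdiv2l (R : numFieldType) (n a b : nat) :
  0 < a -> a <= b -> (n%:R / b%:R <= n%:R / a%:R :> R)%R.
Proof.
move=> a_gt0 ab; rewrite ler_wpM2l ?ler0n // lef_pV2 ?posrE ?ltr0n ?ler_nat //.
exact: leq_trans ab.
Qed.

Lemma ltr_natdiv2l (R : numFieldType) (n a b : nat) :
  0 < n -> 0 < a -> a < b -> (n%:R / b%:R < n%:R / a%:R :> R)%R.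
Proof.
move=> n_gt0 a_gt0 ab; rewrite ltr_pM2l ?ltr0n // ltf_pV2 ?posrE ?ltr0n ?ltr_nat //.
exact: ltn_trans ab.
Qed.

Lemma sum_natdiv_lt_transfer (R : realFieldType) (T : finType) (d d' c c' : T -> nat)
    (a b : T) (n : nat) :
  a != b -> 0 < n -> (forall x, 0 < c' x) -> (forall x, c' x <= c x) ->
  d a = d' a + n -> d' b = d b + n -> (forall x, x != a -> x != b -> d' x = d x) ->
  c' b < c a ->
  (\sum_x (d x)%:R / (c x)%:R < \sum_x (d' x)%:R / (c' x)%:R :> R)%R.
Proof.
move=> ab n_gt0 c'_gt0 c'_le da d'b d'_other c'b_lt.
rewrite !(bigD2 _ ab) da d'b !natrD !mulrDl.
have others : (\sum_(x | (x != a) && (x != b)) (d x)%:R / (c x)%:R <=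
    \sum_(x | (x != a) && (x != b)) (d' x)%:R / (c' x)%:R :> R)%R.
  by apply: ler_sum => x /andP [xa xb]; rewrite d'_other // ler_natdiv2l.
have := ler_natdiv2l R (d' a) (c'_gt0 a) (c'_le a).
have := ler_natdiv2l R (d b) (c'_gt0 b) (c'_le b).
have := ltr_natdiv2l R n_gt0 (c'_gt0 b) c'b_lt.
lra.
Qed.

Theorem theorem3p5 (T1 T2 : finType) (e1 : rel T1) (e2 : rel T2)
  (u : T1) (w : T2) (k : nat) :
  simple_graph e1 -> connected_graph e1 ->
  simple_graph e2 -> connected_graph e2 ->
  1 < #|T2| -> 1 <= k ->
  ecc e1 u <= ecc e2 w ->
  (xi_ee (@G_edge T1 T2 e1 e2 k u w) < xi_ee (@G_moved_edge T1 T2 e1 e2 k u w))%R.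
Proof.
move=> _ conn1 _ conn2 T2_nontrivial k_gt0 ecc12.
apply: (@sum_natdiv_lt_transfer _ _ _ _ _ _ (inr None) (inl (inr w)) #|W T1 T2 k|) => //.
- by apply/card_gt0P; exists (inr (Some (Ordinal k_gt0))); rewrite inE.
- by move=> x; apply: ecc_G'_gt0.
- exact: ecc_G'_le_G.
- exact: deg_cedge_hub.
- exact: deg_cedge_hub.
- by move=> x xv xw; apply: deg_cedge_other.
- have := ecc_G'_w k conn1 conn2 T2_nontrivial ecc12; have := ecc_G_hub e1 u w k conn2.
  lia.
Qed.
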